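(* The number of iterations performed by any instance of FSCO that satisfies condition (F1) (i.e., there exists $\underline \lambda>0$ such that the stepsizes generated by FSCO satisfy $\lambda_k \geq {\underline \lambda}$ for every $k \ge 0$) is bounded by \[ \min\left\{\min\left[ \frac{1}{\chi}\left(1+\frac{1}{\underline{\lambda} \mu}\right), 1+\frac{1}{\underline{\lambda} \nu}\right] \log\left(1+ \frac{\mu d_0^2}{\bar \varepsilon}\right), \frac{d_0^2}{\underline \lambda\,\bar \varepsilon} \right\}, \] where the scalars $\chi$ and $\bar \varepsilon$ are inputs to FSCO, $d_0 := \min \{\|x-\hat x_0\| : x \in X_*\}$, and \[ \mu=\mu(\phi), \quad \nu := \min \left\{ \mu(\phi) \, , \, \inf_k \mu (\hat \Gamma_k) \right\}. \] (By convention, the bound should be understood as being equal to $d_0^2/(\underline{\lambda}\,\bar{\varepsilon})$ when $\mu=0$.)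
   Context: Consider the problem $\phi_*:=\min\{\phi(x): x\in\mathbb{R}^n\}$, where $\phi:\mathbb{R}^n\to(-\infty,+\infty]$ is a proper lower semicontinuous convex function, and let $X_*$ be its (nonempty) set of optimal solutions. For a proper lower semicontinuous convex function $\psi$, the intrinsic convex parameter $\mu(\psi)$ is the largest scalar $\mu$ such that $\psi(\cdot)-\mu\|\cdot\|^2/2$ is convex. A black-box BB$(x^-,\chi,\varepsilon)$, with input $(x^-,\chi,\varepsilon)\in \mathrm{dom}\,\phi\times[0,1)\times\mathbb{R}_{++}$, outputs $(x,y,\Gamma,\lambda)$ with $x,y\in\mathrm{dom}\,\phi$, $\Gamma$ a proper lower semicontinuous convex function on $\mathbb{R}^n$, and $\lambda>0$, satisfying $\Gamma\le\phi$, \[ \phi(y)+\frac{\chi}{2\lambda}\|y-x^-\|^2-\min_{u\in\mathbb{R}^n}\left\{\Gamma(u)+\frac{1}{2\lambda}\|u-x^-\|^2\right\}\le\varepsilon, \qquad x=\mathrm{argmin}_{u\in\mathbb{R}^n}\left\{\Gamma(u)+\frac{1}{2\lambda}\|u-x^-\|^2\right\}. \] The framework FSCO$(\hat x_0,\chi,\bar\varepsilon)$, with $(\hat x_0,\chi,\bar\varepsilon)\in\mathrm{dom}\,\phi\times[0,1)\times\mathbb{R}_{+}$, sets $k=1$ and repeats: compute $(\hat x_k,\hat y_k,\hat\Gamma_k,\lambda_k)=\mathrm{BB}(\hat x_{k-1},\chi,(1-\chi)\bar\varepsilon/2)$; if $\phi(\hat y_k)-\phi_*\le\bar\varepsilon$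 stop, else set $k\leftarrow k+1$ and repeat. Condition (F1): there exists $\underline\lambda>0$ such that $\lambda_k\ge\underline\lambda$ for every $k\ge 0$. *)

From HB Require Import structures.
From mathcomp Require Import all_boot all_order all_algebra.
From mathcomp Require Import all_classical all_reals.
From mathcomp Require Import ereal exp.
Set Implicit Arguments. Unset Strict Implicit. Unset Printing Implicit Defensive.
Import Order.TTheory GRing.Theory Num.Theory.
Local Open Scope classical_set_scope.
Local Open Scope ring_scope.
Local Open Scope ereal_scope.

Section Defs.
Variables (R : realType) (n : nat).
Notation vec := 'rV[R]_n.

Definition enormsq (v : vec) : R := (\sum_(i < n) (v ord0 i) ^+ 2)%R.
Definition enorm (v : vec) : R := Num.sqrt (enormsq v).

Definition edom (f : vec -> \bar R) : set vec := [set x | f x < +oo].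

Definition proper_fn (f : vec -> \bar R) : Prop :=
  (exists x, f x < +oo) /\ (forall x, -oo < f x).

Definition lsc_fn (f : vec -> \bar R) : Prop :=
  forall (x : vec) (a : R), a%:E < f x ->
    exists2 d : R, (0 < d)%R & forall y, (enorm ((y - x)%R) < d)%R -> a%:E < f y.

Definition convex_fn (f : vec -> \bar R) : Prop :=
  forall (x y : vec) (t : R), (0 <= t <= 1)%R ->
    f ((t *: x + (1 - t) *: y)%R) <= t%:E * f x + (1 - t)%R%:E * f y.

Definition closed_proper_convex (f : vec -> \bar R) : Prop :=
  [/\ proper_fn f, lsc_fn f & convex_fn f].

Definition mu_param (f : vec -> \bar R) : \bar R :=
  ereal_sup [set c%:E | c in
    [set c : R | convex_fn (fun x => f x - (c / 2 * enormsq x)%:E)]].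

Definition opt_val (phi : vec -> \bar R) : \bar R := ereal_inf (range phi).
Definition opt_set (phi : vec -> \bar R) : set vec :=
  [set x | phi x = opt_val phi].

Definition dist0 (phi : vec -> \bar R) (x0 : vec) : R :=
  inf [set enorm ((x - x0)%R) | x in opt_set phi].

Definition BB_spec (phi : vec -> \bar R) (xm : vec) (chi eps : R)
    (x y : vec) (Gam : vec -> \bar R) (lam : R) : Prop :=
  [/\ (edom phi x /\ edom phi y), closed_proper_convex Gam, (0 < lam)%R,
      (forall u, Gam u <= phi u) /\
      (forall u, Gam x + (enormsq ((x - xm)%R) / (2 * lam))%:E
                 <= Gam u + (enormsq ((u - xm)%R) / (2 * lam))%:E) &
      phi y + (chi / (2 * lam) * enormsq ((y - xm)%R))%:E
        - (Gam x + (enormsq ((x - xm)%R) / (2 * lam))%:E) <= eps%:E].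

(* A run of FSCO(xh 0, chi, epsb) performing N iterations (k = 1..N):
   each iteration calls BB on the previous prox center, and the stopping
   test failed at every iteration k < N (so iteration k+1 was performed). *)
Definition FSCO_run (phi : vec -> \bar R) (chi epsb : R) (N : nat)
    (xh yh : nat -> vec) (G : nat -> vec -> \bar R) (lam : nat -> R) : Prop :=
  [/\ edom phi (xh 0%N),
      (forall k, (1 <= k <= N)%N ->
         BB_spec phi (xh k.-1) chi ((1 - chi) * epsb / 2) (xh k) (yh k) (G k) (lam k)) &
      (forall k, (1 <= k < N)%N -> (fine (opt_val phi) + epsb)%:E < phi (yh k))].

Definition nu_param (phi : vec -> \bar R) (G : nat -> vec -> \bar R) (N : nat)
  : \bar R :=
  Order.min (mu_param phi)
    (ereal_inf [set mu_param (G k) | k in [set k : nat | (1 <= k <= N)%N]]).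

End Defs.

(* Each black-box call is an inexact proximal step on a model Gamma_k <= phi.
   If Gamma_k is c-strongly convex, optimality of the prox center x_k gives,
   for every u in dom phi,
     2 lam phi(y_k) + chi |y_k - x_(k-1)|^2 + (1 + c lam) |u - x_k|^2
       <= 2 lam phi(u) + |u - x_(k-1)|^2 + lam (1 - chi) epsb,
   while phi(y_k) > phi_* + epsb as long as FSCO has not stopped.  Writing
   D_k = |x_* - x_k|^2 for an optimal x_* and using lam >= lamlb, the choice
   u = x_* yields (1 + r) D_k + lamlb epsb <= D_(k-1) with r = lamlb c
   (c = 0, or c = nu), and the choice u = (1 - chi) x_* + chi y_k, together
   with the mu-strong convexity of phi, yields the same recursion with
   r = chi lamlb mu / (1 + (1 - chi) lamlb mu).  Unrolling the recursion gives
   e * sum_(j < M) (1 + r)^j <= D_0 with e = lamlb epsb, whence M e <= D_0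
   and, since ln (1 + r) >= r / (1 + r), the logarithmic bounds; minimising
   over x_* turns D_0 into d_0^2. *)

From HB Require Import structures.
From mathcomp Require Import all_boot all_order all_algebra.
From mathcomp Require Import all_classical all_reals.
From mathcomp Require Import ereal exp.
From mathcomp Require Import ring lra zify.
Set Implicit Arguments. Unset Strict Implicit. Unset Printing Implicit Defensive.
Import Order.TTheory GRing.Theory Num.Theory.
Local Open Scope classical_set_scope.
Local Open Scope ring_scope.

Lemma affine_le_right_end (R : realFieldType) (a b x y K : R) : a < b ->
  (forall s, a <= s < b -> x + s * K <= y) -> x + b * K <= y.
Proof.
move=> ab h; have [K0|K0] := leP K 0.
  apply: le_trans (h a _); last by rewrite lexx ab.
  by rewrite lerD2l ler_wnM2r // ltW.
apply/ler_addgt0Pr => e e0.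
set s := Num.max a (b - e / K).
have sab : a <= s < b.
  by rewrite le_max lexx /= gt_max ab /= ltrBlDr ltrDl divr_gt0.
have bsK : (b - s) * K <= e.
  by rewrite -ler_pdivlMr // lerBlDl -lerBlDr le_max lexx orbT.
by have := h s sab; lra.
Qed.

Section Recurrences.
Variable R : realType.
Implicit Types (D : nat -> R) (q r e : R).

Lemma recurrence_geometric_sum D q e M : 0 <= q ->
  (forall k, (0 < k <= M)%N -> q * D k + e <= D k.-1) ->
  q ^+ M * D M + e * \sum_(j < M) q ^+ j <= D 0%N.
Proof.
move=> q0; elim: M => [|M IH] step.
  by rewrite expr0 mul1r big_ord0 mulr0 addr0.
have stepM : q * D M.+1 + e <= D M by apply: step; rewrite /= ltnSn.
have /IH : forall k, (0 < k <= M)%N -> q * D k + e <= D k.-1.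
  by move=> k /andP[k0 kM]; apply: step; rewrite k0 leqW.
rewrite big_ord_recr /= mulrDr exprSr -mulrA.
have := ler_wpM2l (exprn_ge0 M q0) stepM; rewrite mulrDr; lra.
Qed.

Lemma recurrence_linear_count D e M : 0 <= D M ->
  (forall k, (0 < k <= M)%N -> D k + e <= D k.-1) -> M%:R * e <= D 0%N.
Proof.
move=> DM0 step.
have /(recurrence_geometric_sum ler01) :
    forall k, (0 < k <= M)%N -> 1 * D k + e <= D k.-1.
  by move=> k /step; rewrite mul1r.
rewrite expr1n mul1r; under eq_bigr do rewrite expr1n.
rewrite sumr_const card_ord [M%:R * e]mulrC; lra.
Qed.

Lemma recurrence_geometric_count D r e M : 0 < r -> 0 <= D M ->
  (forall k, (0 < k <= M)%N -> (1 + r) * D k + e <= D k.-1) ->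
  e * ((1 + r) ^+ M - 1) <= r * D 0%N.
Proof.
move=> r0 DM0 step.
have q0 : 0 <= 1 + r by lra.
have sum_le : e * \sum_(j < M) (1 + r) ^+ j <= D 0%N.
  have := recurrence_geometric_sum q0 step.
  have := mulr_ge0 (exprn_ge0 M q0) DM0; lra.
rewrite subrX1 addrAC subrr add0r mulrCA.
by rewrite ler_wpM2l // ltW.
Qed.

Lemma ln1Dx_ge r : -1 < r -> r / (1 + r) <= ln (1 + r).
Proof.
move=> r1; have r1' : 0 < 1 + r by lra.
have := @le_ln1Dx R ((1 + r)^-1 - 1).
rewrite [1 + (_ - 1)]addrC subrK lnV ?posrE // ltrBrDr addrC subrr invr_gt0.
move=> /(_ r1').
have -> : r / (1 + r) = 1 - (1 + r)^-1 by field; rewrite lt0r_neq0.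
lra.
Qed.

Lemma count_le_ln r Z M : 0 < r -> (1 + r) ^+ M <= Z ->
  M%:R <= (1 + r^-1) * ln Z.
Proof.
move=> r0 qMZ; have q0 : 0 < 1 + r by lra.
have lnZ : M%:R * ln (1 + r) <= ln Z.
  rewrite mulr_natl -lnXn // ler_ln ?posrE ?exprn_gt0 //.
  by rewrite (lt_le_trans _ qMZ) ?exprn_gt0.
have lnq : r / (1 + r) <= ln (1 + r) by apply: ln1Dx_ge; lra.
have -> : M%:R = (1 + r^-1) * (M%:R * (r / (1 + r))) :> R.
  by field; rewrite !lt0r_neq0.
rewrite ler_pM2l ?addr_gt0 ?invr_gt0 //.
by apply: le_trans lnZ; rewrite ler_wpM2l.
Qed.

End Recurrences.

Section EuclideanNorm.
Variables (R : realType) (n : nat).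
Implicit Types (a b p q u v w : 'rV[R]_n) (t : R).

Lemma enormsq_ge0 v : 0 <= enormsq v.
Proof. by apply: sumr_ge0 => i _; rewrite sqr_ge0. Qed.

Lemma enormsq_convex_comb t a b :
  enormsq (t *: a + (1 - t) *: b) =
  t * enormsq a + (1 - t) * enormsq b - t * (1 - t) * enormsq (a - b).
Proof.
rewrite /enormsq !mulr_sumr -big_split -sumrB /=.
by apply: eq_bigr => i _; rewrite !mxE; ring.
Qed.

Lemma convex_combBr t u v w :
  t *: u + (1 - t) *: v - w = t *: (u - w) + (1 - t) *: (v - w).
Proof. by apply/matrixP => i j; rewrite !mxE; ring. Qed.

Lemma enormsq_add_weighted (x y : R) p q : 0 <= x -> 0 <= y ->
  x * y * enormsq (p + q) <= (x + y) * (x * enormsq q + y * enormsq p).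
Proof.
move=> x0 y0; rewrite /enormsq !mulr_sumr -big_split !mulr_sumr /=.
apply: ler_sum => i _; rewrite !mxE.
by have := sqr_ge0 (x * q ord0 i - y * p ord0 i); nra.
Qed.

Lemma le_dist0_sqr (phi : 'rV[R]_n -> \bar R) (x0 : 'rV[R]_n) (K : R) :
  opt_set phi !=set0 ->
  (forall xs, opt_set phi xs -> K <= enormsq (xs - x0)) ->
  K <= dist0 phi x0 ^+ 2.
Proof.
move=> [xs0 opt_xs0] lbK; have [K0|K0] := leP K 0.
  by rewrite (le_trans K0) ?sqr_ge0.
have sqrtK_le : Num.sqrt K <= dist0 phi x0.
  apply: lb_le_inf; first by exists (enorm (xs0 - x0)), xs0.
  by move=> _ [xs opt_xs <-]; rewrite ler_sqrt ?lbK ?enormsq_ge0.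
rewrite -(sqr_sqrtr (ltW K0)) ler_sqr ?nnegrE ?sqrtr_ge0 //.
exact: le_trans (sqrtr_ge0 K) sqrtK_le.
Qed.

End EuclideanNorm.

Section StrongConvexity.
Variables (R : realType) (n : nat).
Local Notation vec := 'rV[R]_n.
Implicit Types (f : vec -> \bar R) (c : R).

Definition strongly_convex f c := forall (x y : vec) (t : R),
  0 <= t <= 1 -> f x \is a fin_num -> f y \is a fin_num ->
  (f (t *: x + (1 - t) *: y)%R <= (t * fine (f x) + (1 - t) * fine (f y)
     - c / 2 * (t * (1 - t) * enormsq (x - y)))%:E)%E.

Lemma strongly_convex_le f c c' : c <= c' ->
  strongly_convex f c' -> strongly_convex f c.
Proof.
move=> cc' sc x y t t01 fx fy; apply: (le_trans (sc x y t t01 fx fy)).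
rewrite lee_fin lerD2l lerN2 ler_wpM2r ?ler_pM2r //.
by case/andP: t01 => t0 t1; rewrite mulr_ge0 ?enormsq_ge0 ?mulr_ge0 ?subr_ge0.
Qed.

Lemma strongly_convex_of_convex f c :
  convex_fn (fun x => f x - (c / 2 * enormsq x)%:E)%E -> strongly_convex f c.
Proof.
move=> cvx x y t t01 fx fy; have := cvx x y t t01.
rewrite -(fineK fx) -(fineK fy) /=.
rewrite -!EFinB -!EFinM -EFinD EFinN leeBlDr // -EFinD => /le_trans; apply.
by rewrite lee_fin enormsq_convex_comb; lra.
Qed.

Lemma convex_strongly_convex0 f : convex_fn f -> strongly_convex f 0.
Proof.
move=> cvx; apply: strongly_convex_of_convex.
by under eq_fun do rewrite mul0r mul0r sube0.
Qed.

Lemma mu_param_strongly_convex f c :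
  (c%:E <= mu_param f)%E -> strongly_convex f c.
Proof.
move=> le_c_mu x y t t01 fx fy.
set A := t * fine (f x) + (1 - t) * fine (f y).
set K := t * (1 - t) * enormsq (x - y).
have below s : s < c -> (f (t *: x + (1 - t) *: y)%R <= (A - s / 2 * K)%:E)%E.
  move=> sc; have /ereal_sup_gt[_ [s' cvx_s' <-]] : (s%:E < mu_param f)%E.
    by apply: lt_le_trans le_c_mu; rewrite lte_fin.
  rewrite lte_fin => ss'.
  have sc_s' := strongly_convex_of_convex cvx_s'.
  exact: strongly_convex_le (ltW ss') sc_s' x y t t01 fx fy.
case E: (f _) => [r| |] in below *; last by rewrite leNye.
- rewrite lee_fin; suff : r + c * (K / 2) <= A by lra.
  apply: (@affine_le_right_end _ (c - 1)); first by rewrite ltrBlDr ltrDl.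
  move=> s /andP[_ sc]; have := below s sc; rewrite lee_fin; lra.
- by have := below (c - 1); rewrite ltrBlDr ltrDl ltr01 => /(_ isT).
Qed.

Lemma strongly_convex_add_sqdist f c (lam : R) (xm : vec) : 0 < lam ->
  strongly_convex f c ->
  strongly_convex (fun u => f u + (enormsq (u - xm) / (2 * lam))%:E)%E
    (c + lam^-1).
Proof.
move=> lam0 sc x y t t01; rewrite !fin_numD /= !andbT => fx fy.
rewrite !fineD //= convex_combBr enormsq_convex_comb.
apply: le_trans (leeD2r _ (sc x y t t01 fx fy)) _.
rewrite -EFinD lee_fin opprB addrA subrK le_eqVlt; apply/orP; left; apply/eqP.
by field; rewrite lt0r_neq0.
Qed.

Lemma strongly_convex_min_growth f c (x : vec) : strongly_convex f c ->
  f x \is a fin_num -> (forall u, f x <= f u)%E ->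
  forall u, f u \is a fin_num ->
  fine (f x) + c / 2 * enormsq (u - x) <= fine (f u).
Proof.
move=> sc fx xmin u fu; rewrite -[c / 2 * _]mul1r.
apply: (@affine_le_right_end _ 0) => // s /andP[s0 s1].
have t0 : 0 < 1 - s by lra.
have t01 : 0 <= 1 - s <= 1 by apply/andP; split; lra.
have := le_trans (xmin _) (sc u x (1 - s) t01 fu fx).
rewrite -{1}(fineK fx) lee_fin => h.
rewrite -(ler_pM2l t0); nra.
Qed.

End StrongConvexity.

Section BlackBox.
Variables (R : realType) (n : nat).
Local Notation vec := 'rV[R]_n.

Lemma BB_descent (phi : vec -> \bar R) (xm : vec) (chi eps : R)
    (x y : vec) (Gam : vec -> \bar R) (lam c : R) :
  (forall u, -oo < phi u)%E -> BB_spec phi xm chi eps x y Gam lam ->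
  strongly_convex Gam c ->
  forall u, (phi u < +oo)%E ->
  2 * lam * fine (phi y) + chi * enormsq (y - xm)
    + (1 + c * lam) * enormsq (u - x)
  <= 2 * lam * fine (phi u) + enormsq (u - xm) + 2 * lam * eps.
Proof.
move=> phigt [[dx dy] [[_ Ggt] _ _] lam0 [Gle xmin] inexact] sc u du.
have Gfin v : (phi v < +oo)%E -> Gam v \is a fin_num.
  by move=> dv; rewrite fin_real // Ggt (le_lt_trans (Gle v) dv).
have phifin v : (phi v < +oo)%E -> phi v \is a fin_num.
  by move=> dv; rewrite fin_real // phigt dv.
have hfin v : (phi v < +oo)%E ->
    (Gam v + (enormsq (v - xm) / (2 * lam))%:E)%E \is a fin_num.
  by move=> dv; rewrite fin_numD Gfin.
have := strongly_convex_min_growth (strongly_convex_add_sqdist lam0 sc)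
  (hfin x dx) xmin (hfin u du).
rewrite !fineD ?Gfin //= => growth.
have Gu_le : fine (Gam u) <= fine (phi u) by rewrite fine_le ?Gfin ?phifin.
move: inexact; rewrite -(fineK (phifin y dy)) -(fineK (Gfin x dx)).
rewrite -!EFinD lee_fin /= => inexact.
have lam2 : 0 < (2 * lam)^-1 by rewrite invr_gt0 mulr_gt0.
have modulus : (c + lam^-1) / 2 = (2 * lam)^-1 * (1 + c * lam).
  by field; rewrite lt0r_neq0.
rewrite -(ler_pM2l lam2) !mulrDr !mulKf ?lt0r_neq0 ?mulr_gt0 //.
rewrite modulus in growth; lra.
Qed.

End BlackBox.

Lemma nu_param_le (R : realType) (n : nat) (phi : 'rV[R]_n -> \bar R)
    (G : nat -> 'rV[R]_n -> \bar R) (N : nat) :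
  0 < fine (nu_param phi G N) ->
  ((fine (nu_param phi G N))%:E <= mu_param phi)%E /\
  forall k, (1 <= k <= N)%N ->
    ((fine (nu_param phi G N))%:E <= mu_param (G k))%E.
Proof.
case E : (nu_param phi G N) => [nu| |]; rewrite /= ?ltxx // => _.
have : (nu%:E <= nu_param phi G N)%E by rewrite E.
rewrite /nu_param le_min => /andP[-> le_inf]; split=> // k k1N.
by apply: le_trans le_inf _; apply: ereal_inf_lbound; exists k.
Qed.

Section FSCO.
Variables (R : realType) (n : nat) (phi : 'rV[R]_n -> \bar R).
Variables (chi epsb lamlb : R) (N : nat) (xh yh : nat -> 'rV[R]_n).
Variables (G : nat -> 'rV[R]_n -> \bar R) (lam : nat -> R).
Hypothesis phigt : forall u, (-oo < phi u)%E.
Hypotheses (chi_ge0 : 0 <= chi) (chi_lt1 : chi < 1) (epsb_gt0 : 0 < epsb).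
Hypothesis run : FSCO_run phi chi epsb N xh yh G lam.
Hypothesis lamlb_gt0 : 0 < lamlb.
Hypothesis lamlb_le : forall k, (1 <= k <= N)%N -> lamlb <= lam k.

Local Notation D xs k := (enormsq (xs - xh k)).

Lemma opt_set_fine xs : opt_set phi xs ->
  (phi xs < +oo)%E /\ fine (phi xs) = fine (opt_val phi).
Proof.
case: run => dom0 _ _ opt_xs; rewrite opt_xs; split=> //.
by apply: le_lt_trans dom0; apply: ereal_inf_lbound; exists (xh 0%N).
Qed.

Lemma FSCO_step_spec k : (0 < k <= N.-1)%N ->
  [/\ BB_spec phi (xh k.-1) chi ((1 - chi) * epsb / 2)
        (xh k) (yh k) (G k) (lam k),
      lamlb <= lam k, (phi (yh k) < +oo)%E &
      fine (opt_val phi) + epsb < fine (phi (yh k))].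
Proof.
case: run => _ BB stop kN.
have kN' : (0 < k <= N)%N by lia.
have BBk := BB k kN'; case: (BBk) => [[_ dy] _ _ _ _].
split=> //; first exact: lamlb_le.
by rewrite -lte_fin (fineK (fin_real _)) ?phigt ?stop //; lia.
Qed.

Lemma FSCO_step_model c xs k : 0 <= c -> opt_set phi xs ->
  (0 < k <= N.-1)%N -> strongly_convex (G k) c ->
  (1 + lamlb * c) * D xs k + lamlb * epsb <= D xs k.-1.
Proof.
move=> c0 opt_xs kN sc; have [dxs phixs] := opt_set_fine opt_xs.
have [BBk lamk dy stop] := FSCO_step_spec kN.
have := BB_descent phigt BBk sc dxs; rewrite phixs.
have lam0 : 0 < lam k by apply: lt_le_trans lamk.
have two_lam : 0 < 2 * lam k by rewrite mulr_gt0.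
have dlam : 0 <= lam k - lamlb by rewrite subr_ge0.
move: stop; rewrite -(ltr_pM2l two_lam).
have := mulr_ge0 chi_ge0 (enormsq_ge0 (yh k - xh k.-1)).
have := mulr_ge0 (mulr_ge0 dlam c0) (enormsq_ge0 (xs - xh k)).
have := mulr_ge0 dlam (ltW epsb_gt0).
have := mulr_ge0 (mulr_ge0 (ltW lam0) chi_ge0) (ltW epsb_gt0).
lra.
Qed.

Lemma FSCO_descent_objective mu xs k : strongly_convex phi mu ->
  opt_set phi xs -> (0 < k <= N.-1)%N ->
  (1 - chi) * D xs k + chi * enormsq (yh k - xh k)
    + (1 - chi) * chi * lam k * mu * enormsq (xs - yh k)
    + (1 - chi) * lam k * epsb <= (1 - chi) * D xs k.-1.
Proof.
move=> sc opt_xs kN; have [dxs phixs] := opt_set_fine opt_xs.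
have [BBk _ dy stop] := FSCO_step_spec kN.
have [_ [_ _ cvx] lam0 _ _] := BBk.
have fin v : (phi v < +oo)%E -> phi v \is a fin_num.
  by move=> dv; rewrite fin_real ?phigt.
have t01 : 0 <= 1 - chi <= 1.
  by rewrite subr_ge0 (ltW chi_lt1) lerBlDr lerDl chi_ge0.
(* BB_descent is tested at u = (1 - chi) xs + chi (yh k). *)
have sc_u := sc _ _ _ t01 (fin _ dxs) (fin _ dy).
have du := le_lt_trans sc_u (ltry _).
move: sc_u; rewrite -(fineK (fin _ du)) lee_fin phixs => sc_u.
have := BB_descent phigt BBk (convex_strongly_convex0 cvx) du.
have subBB (a b c : 'rV[R]_n) : (a - c) - (b - c) = a - b.
  by rewrite opprB subrKA.
rewrite !convex_combBr !enormsq_convex_comb !subBB.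
have two_lam : 0 < 2 * lam k by rewrite mulr_gt0.
have := ler_wpM2l (ltW two_lam) sc_u.
move: stop; rewrite -(ltr_pM2l (_ : 0 < 2 * lam k * (1 - chi))); last first.
  by rewrite mulr_gt0 // subr_gt0.
rewrite subKr; lra.
Qed.

Lemma FSCO_step_objective mu xs k : 0 < mu -> 0 < chi ->
  strongly_convex phi mu -> opt_set phi xs -> (0 < k <= N.-1)%N ->
  (1 + chi * lamlb * mu / (1 + (1 - chi) * lamlb * mu)) * D xs k + lamlb * epsb
    <= D xs k.-1.
Proof.
move=> mu0 chi0 sc opt_xs kN.
have descent := FSCO_descent_objective sc opt_xs kN.
have [_ lamk _ _] := FSCO_step_spec kN.
have t0 : 0 < 1 - chi by rewrite subr_gt0.
set d := 1 + (1 - chi) * lamlb * mu.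
have d0 : 0 < d by rewrite ltr_wpDr // !mulr_ge0 // ltW.
set w := (1 - chi) * lamlb * mu * chi.
have w0 : 0 <= w by rewrite !mulr_ge0 // ltW.
have young := enormsq_add_weighted (xs - yh k) (yh k - xh k) (ltW chi0) w0.
rewrite subrKA in young.
have rate : (1 - chi) * (chi * lamlb * mu / d) * D xs k
    <= chi * enormsq (yh k - xh k) + w * enormsq (xs - yh k).
  rewrite -(ler_pM2l (mulr_gt0 chi0 d0)).
  have -> : chi * d * ((1 - chi) * (chi * lamlb * mu / d) * D xs k)
      = chi * w * D xs k by rewrite /w; field; rewrite lt0r_neq0.
  by have -> : chi * d = chi + w by rewrite /d /w; ring.
have dlam : 0 <= lam k - lamlb by rewrite subr_ge0.
rewrite /w in rate; rewrite -(ler_pM2l t0).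
have := mulr_ge0 (mulr_ge0 (mulr_ge0 (mulr_ge0 dlam (ltW t0)) (ltW chi0))
  (ltW mu0)) (enormsq_ge0 (xs - yh k)).
have := mulr_ge0 (mulr_ge0 dlam (ltW t0)) (ltW epsb_gt0).
lra.
Qed.

Lemma FSCO_count_sublinear : opt_set phi !=set0 ->
  (N.-1)%:R <= dist0 phi (xh 0%N) ^+ 2 / (lamlb * epsb).
Proof.
move=> opt_ne; rewrite ler_pdivlMr ?mulr_gt0 //.
apply: le_dist0_sqr => // xs opt_xs.
apply: (@recurrence_linear_count _ (fun k => D xs k)); first exact: enormsq_ge0.
move=> k kN; have [[_ [_ _ cvx] _ _ _] _ _ _] := FSCO_step_spec kN.
by have := FSCO_step_model (lexx 0) opt_xs kN (convex_strongly_convex0 cvx);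
  rewrite mulr0 addr0 mul1r.
Qed.

Lemma FSCO_count_log r mu : 0 < r -> r <= lamlb * mu -> opt_set phi !=set0 ->
  (forall xs k, opt_set phi xs -> (0 < k <= N.-1)%N ->
     (1 + r) * D xs k + lamlb * epsb <= D xs k.-1) ->
  (N.-1)%:R <= (1 + r^-1) * ln (1 + mu * dist0 phi (xh 0%N) ^+ 2 / epsb).
Proof.
move=> r0 r_le opt_ne step; set d0 := dist0 phi (xh 0%N).
have e0 : 0 < lamlb * epsb by rewrite mulr_gt0.
have d0_ge0 : 0 <= d0 ^+ 2 := sqr_ge0 d0.
apply: count_le_ln => //; rewrite -lerBlDl.
suff : (1 + r) ^+ N.-1 - 1 <= r * d0 ^+ 2 / (lamlb * epsb).
  move=> /le_trans; apply; rewrite invfM mulrA ler_pdivrMr //.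
  rewrite divfK ?gt_eqF // ler_pdivrMr // mulrAC.
  by apply: ler_wpM2r => //; rewrite mulrC.
suff : lamlb * epsb * ((1 + r) ^+ N.-1 - 1) / r <= d0 ^+ 2.
  by rewrite ler_pdivrMr // ler_pdivlMr // mulrC [r * _]mulrC.
rewrite /d0; apply: le_dist0_sqr => // xs opt_xs.
rewrite ler_pdivrMr // [_ * r]mulrC.
exact: recurrence_geometric_count r0 (enormsq_ge0 _) (step xs ^~ opt_xs).
Qed.

Lemma FSCO_count_objective mu : 0 < mu -> (mu%:E <= mu_param phi)%E ->
  0 < chi -> opt_set phi !=set0 ->
  (N.-1)%:R <= chi^-1 * (1 + (lamlb * mu)^-1)
                 * ln (1 + mu * dist0 phi (xh 0%N) ^+ 2 / epsb).
Proof.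
move=> mu0 mu_le chi0 opt_ne.
have d_gt0 : 0 < 1 + (1 - chi) * lamlb * mu.
  by rewrite ltr_wpDr // !mulr_ge0 ?subr_ge0 // ltW.
have -> : chi^-1 * (1 + (lamlb * mu)^-1)
    = 1 + (chi * lamlb * mu / (1 + (1 - chi) * lamlb * mu))^-1.
  by field; rewrite !gt_eqF // ?mulr_gt0.
apply: FSCO_count_log => //.
- by rewrite divr_gt0 // !mulr_gt0.
- rewrite ler_pdivrMr // -mulrA [lamlb * mu * _]mulrC ler_pM2r ?mulr_gt0 //.
  by rewrite (le_trans (ltW chi_lt1)) // lerDl !mulr_ge0 ?subr_ge0 // ltW.
- move=> xs k; apply: FSCO_step_objective => //.
  exact: mu_param_strongly_convex.
Qed.

Lemma FSCO_count_model nu mu : 0 < nu -> nu <= mu ->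
  (forall k, (1 <= k <= N)%N -> (nu%:E <= mu_param (G k))%E) ->
  opt_set phi !=set0 ->
  (N.-1)%:R <= (1 + (lamlb * nu)^-1)
                 * ln (1 + mu * dist0 phi (xh 0%N) ^+ 2 / epsb).
Proof.
move=> nu0 nu_mu nu_G opt_ne.
apply: FSCO_count_log => //; first by rewrite mulr_gt0.
  by rewrite ler_pM2l.
move=> xs k opt_xs kN; apply: (FSCO_step_model (ltW nu0) opt_xs kN).
by apply: mu_param_strongly_convex; apply: nu_G; lia.
Qed.

End FSCO.

Theorem theorem3p2 (R : realType) (n : nat) (phi : 'rV[R]_n -> \bar R)
  (chi epsb lamlb : R) (N : nat)
  (xh yh : nat -> 'rV[R]_n) (G : nat -> 'rV[R]_n -> \bar R) (lam : nat -> R) :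
  closed_proper_convex phi ->
  opt_set phi !=set0 ->
  0 <= chi < 1 -> 0 < epsb ->
  FSCO_run phi chi epsb N xh yh G lam ->
  (* condition (F1) *)
  0 < lamlb -> (forall k, (1 <= k <= N)%N -> lamlb <= lam k) ->
  let d0 := dist0 phi (xh 0%N) in
  let nu := fine (nu_param phi G N) in
  (N.-1)%:R <= d0 ^+ 2 / (lamlb * epsb) /\
  (forall mu : R, mu_param phi = mu%:E -> 0 < mu ->
     (0 < chi -> (N.-1)%:R <=
        chi^-1 * (1 + (lamlb * mu)^-1) * ln (1 + mu * d0 ^+ 2 / epsb)) /\
     (0 < nu -> (N.-1)%:R <=
        (1 + (lamlb * nu)^-1) * ln (1 + mu * d0 ^+ 2 / epsb))).
Proof.
move=> [[_ phigt] _ _] opt_ne /andP[chi0 chi1] eps0 run lamlb0 lamlb_le d0 nu.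
split.
  exact: (FSCO_count_sublinear phigt chi0 chi1 eps0 run lamlb0 lamlb_le).
move=> mu mu_phi mu0; split => [chi_gt0 | nu0].
  apply: (FSCO_count_objective phigt chi0 chi1 eps0 run lamlb0 lamlb_le) => //.
  by rewrite mu_phi.
have [nu_mu nu_G] := nu_param_le nu0.
apply: (FSCO_count_model phigt chi0 chi1 eps0 run lamlb0 lamlb_le nu0) => //.
by rewrite -lee_fin -mu_phi.
Qed.
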